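(* Let $x\in A^{\mathbb N}$ be an infinite word. If there exists a finite maximal bifix code $X\subset A^+$ of degree $d$ such that $\mathrm{Card}(X\cap F(x))\le d$, then $x$ is ultimately periodic.
   Context: $A$ is a finite alphabet; $F(x)$ is the set of finite factors of $x$. A bifix code is a set of nonempty words none of which is a proper prefix or proper suffix of another; it is maximal if not properly contained in another bifix code of $A^*$. A parse of $w$ with respect to $X$ is a triple $(v,z,u)$ with $w=vzu$, $v$ having no suffix in $X$, $z\in X^*$, $u$ having no prefix in $X$; the degree of $X$ is $\max_{w\in A^*}$ of the number of parses of $w$. An infinite word $a_0a_1\cdots$ is ultimately periodic if for some $n\ge1$, $a_{i+n}=a_i$ for all large $i$. *)

From mathcomp Require Import all_boot.
Set Implicit Arguments. Unset Strict Implicit. Unset Printing Implicit Defensive.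

Section Words.
Variable A : finType.

Definition bifix_code (Y : seq A -> Prop) : Prop :=
  (forall w, Y w -> w <> [::]) /\
  (forall u v, Y u -> Y v -> u <> v -> ~~ prefix u v /\ ~~ suffix u v).

Definition maximal_bifix_code (X : seq (seq A)) : Prop :=
  bifix_code (fun w => w \in X) /\
  (forall Y : seq A -> Prop, bifix_code Y ->
     (forall w, w \in X -> Y w) -> forall w, Y w -> w \in X).

Definition in_star (X : seq (seq A)) (z : seq A) : Prop :=
  exists ys : seq (seq A), all (fun y => y \in X) ys /\ flatten ys = z.

Definition is_parse (X : seq (seq A)) (w : seq A)
    (t : seq A * seq A * seq A) : Prop :=
  let: (v, z, u) := t in
  [/\ w = v ++ z ++ u,
      (forall s, suffix s v -> s \notin X),
      in_star X z &
      (forall p, prefix p u -> p \notin X)].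

(* X has degree d: d is the maximum over all words w of the number of
   parses of w (the maximum exists and equals d). *)
Definition has_degree (X : seq (seq A)) (d : nat) : Prop :=
  (forall w (P : seq (seq A * seq A * seq A)), uniq P ->
     (forall t, t \in P -> is_parse X w t) -> size P <= d) /\
  (exists w (P : seq (seq A * seq A * seq A)), [/\ uniq P,
     (forall t, t \in P -> is_parse X w t) & size P = d]).

Definition factor (x : nat -> A) (w : seq A) : Prop :=
  exists i, w = mkseq (fun k => x (i + k)) (size w).

(* Card (X \cap F(x)) <= d, where X is the finite set of entries of the list X:
   every duplicate-free list of elements of X that are factors of x has
   length at most d. *)
Definition card_factors_le (X : seq (seq A)) (x : nat -> A) (d : nat) : Prop :=
  forall Y : seq (seq A), uniq Y ->
    (forall w, w \in Y -> (w \in X) /\ factor x w) -> size Y <= d.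

Definition ultimately_periodic (x : nat -> A) : Prop :=
  exists n, 0 < n /\ exists N, forall i, N <= i -> x (i + n) = x i.

End Words.

From mathcomp Require Import all_boot.
From Stdlib Require Import Classical ClassicalEpsilon.

Set Implicit Arguments. Unset Strict Implicit. Unset Printing Implicit Defensive.

(* Let N exceed the lengths of the words of X. Among the words of length N, each y in X is a
   prefix of exactly as many as it is a suffix of. So if some word p of length N had no prefix
   in X, some word s of length N would have no suffix in X, and X + {ps} would still be a bifix
   code: every word of length at least N has a prefix in X. Consequently the parses of any word
   are at most as many as the suffixes of a word t of length N that have no prefix in X.
   If x is not ultimately periodic, some factor t of length N occurs followed by two different
   letters, and then all these suffixes of t are right-special factors of x. In the tree of the
   factors of x cut along X, every right-special node adds a leaf, so X has more than d words
   that are factors of x. *)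

Section PrefixSuffix.
Variable T : eqType.
Implicit Types p q s w : seq T.

Lemma nested_prefixes p q w : prefix p w -> prefix q w -> size p <= size q -> prefix p q.
Proof.
rewrite !prefixE => /eqP def_p /eqP def_q le_pq.
by rewrite -def_q take_takel // def_p.
Qed.

Lemma nested_suffixes p q w : suffix p w -> suffix q w -> size p <= size q -> suffix p q.
Proof.
rewrite -!prefix_rev => pw qw le_pq.
by apply: nested_prefixes pw qw _; rewrite !size_rev.
Qed.

Lemma prefix_rcons_cases p w a : prefix p (rcons w a) -> prefix p w \/ p = rcons w a.
Proof.
rewrite !prefixE -cats1 take_cat; case: ltnP => _ /eqP def_p; first by left; rewrite def_p.
case: (size p - size w) def_p => [|k] /= <-; last by right.
by left; rewrite cats0 take_size.
Qed.

Lemma catIs s1 s2 s : s1 ++ s = s2 ++ s -> s1 = s2.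
Proof.
move=> eq_cat; have := congr1 size eq_cat; rewrite !size_cat => /addIn eq_size.
by move/eqP: eq_cat; rewrite eqseq_cat // => /andP [/eqP].
Qed.

Lemma catsI s s1 s2 : s ++ s1 = s ++ s2 -> s1 = s2.
Proof. by elim: s => //= a s IHs [] /IHs. Qed.

Definition suffixes w := [seq drop i w | i <- iota 0 (size w).+1].

Lemma mem_suffixes w s : (s \in suffixes w) = suffix s w.
Proof.
apply/mapP/idP => [[i _ ->]|]; first exact: suffix_drop.
rewrite suffixE => /eqP <-; exists (size w - size s) => //.
by rewrite mem_iota ltnS leq_subr.
Qed.

Lemma suffixes_uniq w : uniq (suffixes w).
Proof.
rewrite map_inj_in_uniq ?iota_uniq // => i j.
rewrite !mem_iota !ltnS => /andP [_ le_iw] /andP [_ le_jw] /(congr1 size).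
by rewrite !size_drop => /(congr1 (subn (size w))); rewrite !subKn.
Qed.

Lemma prefix_code_prefix_eq (X : seq (seq T)) w :
    {in X &, forall u v, prefix u v -> u = v} ->
  {in X &, forall y1 y2, prefix y1 w -> prefix y2 w -> y1 = y2}.
Proof.
move=> X_pre y1 y2 y1X y2X y1w y2w; case: (leqP (size y1) (size y2)) => [|/ltnW] le_y.
  exact: X_pre (nested_prefixes y1w y2w le_y).
exact/esym/X_pre/(nested_prefixes y2w y1w le_y).
Qed.

Lemma suffix_code_suffix_eq (X : seq (seq T)) w :
    {in X &, forall u v, suffix u v -> u = v} ->
  {in X &, forall y1 y2, suffix y1 w -> suffix y2 w -> y1 = y2}.
Proof.
move=> X_suf y1 y2 y1X y2X y1w y2w; case: (leqP (size y1) (size y2)) => [|/ltnW] le_y.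
  exact: X_suf (nested_suffixes y1w y2w le_y).
exact/esym/X_suf/(nested_suffixes y2w y1w le_y).
Qed.

End PrefixSuffix.

Lemma count_has_sum (S T : eqType) (P : S -> T -> bool) (ys : seq S) (s : seq T) :
    uniq ys -> (forall w, {in ys &, forall y1 y2, P y1 w -> P y2 w -> y1 = y2}) ->
  count (fun w => has (P^~ w) ys) s = \sum_(y <- ys) count (P y) s.
Proof.
elim: ys => [|y ys IHys] /= => [_ _|/andP [y_ys uniq_ys] P_uniq].
  by rewrite big_nil count_pred0.
rewrite big_cons -IHys // => [|w y1 y2 y1_ys y2_ys]; last first.
  by apply: P_uniq; rewrite inE ?y1_ys ?y2_ys orbT.
rewrite -count_predUI [X in _ + X](_ : _ = 0) ?addn0 //.
apply/eqP; rewrite eqn0Ngt -has_count; apply/hasPn => w _ /=.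
apply/andP => -[Pyw /hasP [y' y'_ys Py'w]].
by move: y_ys; rewrite (P_uniq w y y') ?mem_head ?inE ?y'_ys ?orbT.
Qed.

Section Words.
Variable A : finType.

Fixpoint words n : seq (seq A) :=
  if n is m.+1 then [seq a :: w | a <- enum A, w <- words m] else [:: [::]].

Lemma mem_words n w : (w \in words n) = (size w == n).
Proof.
elim: n w => [|n IHn] [|a w] //=; first by apply/allpairsP => -[[b v] []].
rewrite eqSS -IHn; apply/allpairsP/idP => [[[b v] [_ v_n [_ ->]]] // | w_n].
by exists (a, w); rewrite mem_enum.
Qed.

Lemma words_uniq n : uniq (words n).
Proof.
elim: n => //= n IHn; apply: allpairs_uniq; rewrite ?enum_uniq //.
by move=> [a v] [b w] _ _ /= [-> ->].
Qed.

Lemma count_words_cons (P : pred (seq A)) n :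
  count P (words n.+1) = \sum_(a : A) count (fun w => P (a :: w)) (words n).
Proof.
rewrite /= count_flatten sumnE !big_map -enumT big_enum.
by apply: eq_bigr => a _; rewrite count_map.
Qed.

Lemma size_words n : size (words n) = #|A| ^ n.
Proof. by elim: n => //= n IHn; rewrite size_allpairs IHn -cardE expnS. Qed.

Lemma count_prefix_words y n : size y <= n ->
  count (prefix y) (words n) = #|A| ^ (n - size y).
Proof.
elim: n y => [|n IHn] [|b y] // le_yn.
  by rewrite subn0 -size_words -count_predT; apply: eq_count => w; rewrite prefix0s.
rewrite count_words_cons (bigD1 b) //= eqxx big1 ?addn0 => [|a /negbTE a_b]; first exact: IHn.
by rewrite -(count_pred0 (words n)); apply: eq_count => w; rewrite /= eq_sym a_b.
Qed.

Lemma count_suffix_words y n : size y <= n ->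
  count (suffix y) (words n) = #|A| ^ (n - size y).
Proof.
move=> le_yn; have rev_inj := can_inj (@revK A).
have perm_rev : perm_eq (map rev (words n)) (words n).
  apply: uniq_perm; rewrite ?(map_inj_uniq rev_inj) ?words_uniq // => w.
  by rewrite -[w in LHS]revK (mem_map rev_inj) !mem_words size_rev.
rewrite -(size_rev y) -count_prefix_words ?size_rev // -(permP perm_rev) count_map.
by apply: eq_count => w; rewrite /= prefix_revLR.
Qed.

End Words.

Section Parses.
Variables (A : finType) (X : seq (seq A)).

Definition unprefixed s := ~~ has (fun y => prefix y s) X.

(* The last components of the parses of [w] are among these suffixes. *)
Definition unprefixed_suffixes w := [seq s <- suffixes w | unprefixed s].

Lemma mem_unprefixed_suffixes w s :
  (s \in unprefixed_suffixes w) = suffix s w && unprefixed s.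
Proof. by rewrite mem_filter mem_suffixes andbC. Qed.

Lemma unprefixed_suffixes_uniq w : uniq (unprefixed_suffixes w).
Proof. exact/filter_uniq/suffixes_uniq. Qed.

Lemma unprefixed_rcons s a : unprefixed s -> ~~ unprefixed (rcons s a) -> rcons s a \in X.
Proof.
move=> /hasPn s_unpre /negPn /hasP [y yX /prefix_rcons_cases [y_s|<-//]].
by move: (s_unpre y yX); rewrite y_s.
Qed.

Lemma size_unprefixed_suffixes_catl n w t :
    (forall s, n <= size s -> has (fun y => prefix y s) X) -> n <= size t ->
  size (unprefixed_suffixes (w ++ t)) <= size (unprefixed_suffixes t).
Proof.
move=> X_complete long_t; apply: uniq_leq_size => [|s]; first exact: unprefixed_suffixes_uniq.
rewrite !mem_unprefixed_suffixes => /andP [s_wt s_unpre]; rewrite s_unpre andbT.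
have short_s : size s <= size t.
  apply: ltnW (leq_trans _ long_t); rewrite ltnNge; apply: contraTN s_unpre.
  by move/X_complete; rewrite /unprefixed => ->.
exact: nested_suffixes s_wt (suffix_suffix _ _) short_s.
Qed.

Hypothesis X_suffix : {in X &, forall u v, suffix u v -> u = v}.

Lemma in_star_cat_injl v1 v2 z1 z2 :
    (forall s, suffix s v1 -> s \notin X) -> (forall s, suffix s v2 -> s \notin X) ->
    in_star X z1 -> in_star X z2 ->
  v1 ++ z1 = v2 ++ z2 -> v1 = v2.
Proof.
move=> v1_free v2_free [ys1 [ys1X <-]] [ys2 [ys2X <-]].
elim/last_ind: ys1 ys2 ys1X ys2X => [|ys1 y1 IHys] ys2;
  case/lastP: ys2 => [|ys2 y2] //=; rewrite ?all_rcons ?flatten_rcons ?cats0 ?catA.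
- by move=> _ _ ->.
- move=> _ /andP [y2X _] def_v1; move: (v1_free y2); rewrite y2X def_v1.
  by rewrite suffix_suffix => /(_ isT).
- move=> /andP [y1X _] _ def_v2; move: (v2_free y1); rewrite y1X -def_v2.
  by rewrite suffix_suffix => /(_ isT).
move=> /andP [y1X ys1X] /andP [y2X ys2X] eq_cat.
have eq_y : y1 = y2.
  apply: (suffix_code_suffix_eq (w := (v1 ++ flatten ys1) ++ y1) X_suffix) y1X y2X _ _.
    exact: suffix_suffix.
  by rewrite eq_cat suffix_suffix.
by apply: IHys ys1X ys2X _; apply: (@catIs _ _ _ y1); rewrite eq_cat eq_y.
Qed.

Lemma size_parses_le w (P : seq (seq A * seq A * seq A)) :
  uniq P -> (forall t, t \in P -> is_parse X w t) -> size P <= size (unprefixed_suffixes w).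
Proof.
move=> uniq_P P_parses; rewrite -(size_map (fun t => t.2)); apply: uniq_leq_size.
  rewrite map_inj_in_uniq // => -[[v1 z1] u1] [[v2 z2] u2] /P_parses [def_w v1_free z1X _].
  move=> /P_parses [def_w' v2_free z2X _] /= eq_u; subst u2.
  have eq_vz : v1 ++ z1 = v2 ++ z2 by apply: (@catIs _ _ _ u1); rewrite -!catA -def_w -def_w'.
  by have eq_v := in_star_cat_injl v1_free v2_free z1X z2X eq_vz; subst v2; rewrite (catsI eq_vz).
move=> _ /mapP [[[v z] u] /P_parses [def_w _ _ u_free] ->].
rewrite mem_unprefixed_suffixes def_w catA suffix_suffix.
by apply/hasPn => y yX; apply/negP => /u_free; rewrite yX.
Qed.

Hypothesis X_nil : [::] \notin X.

(* [s] is sent to [rcons s a], or to [[::]] when [rcons s a] falls in [X]; by the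
   suffix-code property the latter happens for at most one [s]. *)
Lemma size_unprefixed_suffixes_rcons w a :
  size (unprefixed_suffixes w) <= size (unprefixed_suffixes (rcons w a)).
Proof.
pose f s := if unprefixed (rcons s a) then rcons s a else [::].
have f_inj : {in unprefixed_suffixes w &, injective f}.
  move=> s1 s2; rewrite !mem_unprefixed_suffixes /f.
  move=> /andP [s1_w s1_unpre] /andP [s2_w s2_unpre].
  case: ifP => s1a; case: ifP => s2a; [exact: rcons_injl | by case: (s1) | by case: (s2) |].
  move=> _; apply: (@rcons_injl _ a).
  apply: (suffix_code_suffix_eq (w := rcons w a) X_suffix); rewrite ?suffix_rcons ?eqxx //.
  - exact: unprefixed_rcons s1_unpre (negbT s1a).
  - exact: unprefixed_rcons s2_unpre (negbT s2a).
rewrite -(size_map f) uniq_leq_size ?map_inj_in_uniq ?unprefixed_suffixes_uniq //.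
move=> _ /mapP [s + ->]; rewrite mem_unprefixed_suffixes /f => /andP [s_w s_unpre].
case: ifP => [sa_unpre | _]; first by rewrite mem_unprefixed_suffixes suffix_rcons eqxx s_w.
rewrite mem_unprefixed_suffixes suffix0s; apply/hasPn => y yX.
by apply: contra X_nil; rewrite prefixs0 => /eqP <-.
Qed.

Lemma size_unprefixed_suffixes_cat w t :
  size (unprefixed_suffixes w) <= size (unprefixed_suffixes (w ++ t)).
Proof.
elim/last_ind: t => [|t a IHt]; first by rewrite cats0.
by rewrite -rcons_cat; apply: leq_trans IHt (size_unprefixed_suffixes_rcons _ _).
Qed.

End Parses.

Section MaximalBifixCode.
Variables (A : finType) (X : seq (seq A)).
Hypothesis X_max : maximal_bifix_code X.

Lemma maximal_bifix_nil : [::] \notin X.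
Proof. by case: X_max => -[X_ne _] _; apply/negP => /X_ne. Qed.

Lemma maximal_bifix_prefix_eq : {in X &, forall u v : seq A, prefix u v -> u = v}.
Proof.
case: X_max => -[_ X_bif] _ u v uX vX uv; apply/eqP/negPn/negP => /eqP ne_uv.
by case: (X_bif u v uX vX ne_uv); rewrite uv.
Qed.

Lemma maximal_bifix_suffix_eq : {in X &, forall u v : seq A, suffix u v -> u = v}.
Proof.
case: X_max => -[_ X_bif] _ u v uX vX uv; apply/eqP/negPn/negP => /eqP ne_uv.
by case: (X_bif u v uX vX ne_uv); rewrite uv.
Qed.

Definition depth := (\max_(y <- X) size y).+1.

Lemma size_lt_depth y : y \in X -> size y < depth.
Proof. by move=> yX; rewrite ltnS (leq_bigmax_seq (F := size) _ yX). Qed.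

Lemma long_prefix_or_suffix (u : seq A) :
  depth <= size u -> has (fun y => prefix y u) X || has (fun y => suffix y u) X.
Proof.
move=> long_u; apply/negPn/negP; rewrite negb_or => /andP [/hasPn no_pre /hasPn no_suf].
suff /size_lt_depth : u \in X by rewrite ltnNge long_u.
case: X_max => -[X_ne X_bif] X_maximal.
have short v : v \in X -> ~~ prefix u v /\ ~~ suffix u v.
  move=> /size_lt_depth short_v; have lt_vu := leq_trans short_v long_u.
  by split; apply/negP; [move/size_prefix | move/size_suffix]; rewrite leqNgt lt_vu.
apply: (X_maximal (fun v => v \in X \/ v = u)) => [|v|]; [|by left|by right].
split=> [v [/X_ne // | ->]|v1 v2 [v1X|->] [v2X|->] // ne_v].
- by move=> u_nil; move: long_u; rewrite u_nil.
- exact: X_bif.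
- by split; [exact: no_pre | exact: no_suf].
- exact: short.
Qed.

Lemma count_words_prefix_suffix :
  count (fun w => has (fun y => prefix y w) X) (words A depth) =
  count (fun w => has (fun y => suffix y w) X) (words A depth).
Proof.
rewrite -!(eq_count (fun w => has_undup _ X)) !count_has_sum ?undup_uniq //; last 2 first.
- move=> w y1 y2; rewrite !mem_undup => y1X y2X.
  exact: suffix_code_suffix_eq maximal_bifix_suffix_eq _ _ y1X y2X.
- move=> w y1 y2; rewrite !mem_undup => y1X y2X.
  exact: prefix_code_prefix_eq maximal_bifix_prefix_eq _ _ y1X y2X.
rewrite !big_seq; apply: eq_bigr => y; rewrite mem_undup => /size_lt_depth/ltnW le_y.
by rewrite count_prefix_words ?count_suffix_words.
Qed.

Lemma long_has_prefix w : depth <= size w -> has (fun y => prefix y w) X.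
Proof.
move=> long_w; apply/negPn/negP => no_pre_w.
pose p := take depth w; have size_p : size p = depth by rewrite size_takel.
have no_pre_p : ~~ has (fun y => prefix y p) X.
  apply: contra no_pre_w => /hasP [y yX y_p]; apply/hasP; exists y => //.
  exact: prefix_trans y_p (prefix_take _ _).
have [s] : exists2 s, s \in words A depth & ~~ has (fun y => suffix y s) X.
  apply/allPn; rewrite all_count -count_words_prefix_suffix -all_count.
  by apply/allPn; exists p; rewrite ?mem_words ?size_p.
rewrite mem_words => /eqP size_s no_suf_s.
have long_ps : depth <= size (p ++ s) by rewrite size_cat size_p leq_addr.
case/orP: (long_prefix_or_suffix long_ps) => /hasP [y yX y_ps].
- have y_p : prefix y p.
    by apply: nested_prefixes y_ps (prefix_prefix _ _) _; rewrite size_p ltnW ?size_lt_depth.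
  by move/hasPn: no_pre_p => /(_ y yX); rewrite y_p.
- have y_s : suffix y s.
    by apply: nested_suffixes y_ps (suffix_suffix _ _) _; rewrite size_s ltnW ?size_lt_depth.
  by move/hasPn: no_suf_s => /(_ y yX); rewrite y_s.
Qed.

Lemma size_parses_le_long w t (P : seq (seq A * seq A * seq A)) :
    uniq P -> (forall p, p \in P -> is_parse X w p) -> depth <= size t ->
  size P <= size (unprefixed_suffixes X t).
Proof.
move=> uniq_P P_parses long_t.
apply: leq_trans (size_parses_le maximal_bifix_suffix_eq uniq_P P_parses) _.
apply: leq_trans (size_unprefixed_suffixes_cat maximal_bifix_suffix_eq maximal_bifix_nil w t) _.
exact: size_unprefixed_suffixes_catl long_has_prefix long_t.
Qed.

End MaximalBifixCode.

Section PrefixTree.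
Variable A : finType.

Lemma prefix_rcons_sum (p w : seq A) :
  prefix p w = (w == p) + \sum_(a : A) prefix (rcons p a) w :> nat.
Proof.
case/boolP: (prefix p w) => [/prefixP [r ->] | p_w].
  under eq_bigr do rewrite -cats1 prefix_catr //= eqxx /=.
  case: r => [|b r]; first by rewrite cats0 eqxx big1.
  rewrite (bigD1 b) //= eqxx big1 => [|a /negbTE ->] //.
  by rewrite -[X in _ == X]cats0 eqseq_cat // eqxx prefix0s.
rewrite big1 => [|a _]; last first.
  by apply/eqP; rewrite eqb0; apply: contra p_w; apply/prefix_trans/prefix_rcons.
by case: eqP p_w => // ->; rewrite prefix_refl.
Qed.

Lemma count_prefix_rcons (p : seq A) s :
  count (prefix p) s = count_mem p s + \sum_(a : A) count (prefix (rcons p a)) s.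
Proof.
elim: s => [|w s IHs] /=; first by rewrite big1.
by rewrite IHs prefix_rcons_sum big_split /= addnACA.
Qed.

End PrefixTree.

Section FactorTree.
Variables (A : finType) (F : pred (seq A)) (X : seq (seq A)) (n : nat).
Hypothesis F_nil : F [::].
Hypothesis F_prefix : forall p q, prefix p q -> F q -> F p.
Hypothesis F_extend : forall p, F p -> exists a, F (rcons p a).
Hypothesis X_prefix : {in X &, forall u v : seq A, prefix u v -> u = v}.
Hypothesis X_complete : forall w, n <= size w -> has (fun y => prefix y w) X.

Definition right_special q := exists a b, [/\ a != b, F (rcons q a) & F (rcons q b)].

Variable R : seq (seq A).
Hypothesis R_uniq : uniq R.
Hypothesis R_unprefixed : {in R, forall q, unprefixed X q}.
Hypothesis R_special : {in R, forall q, right_special q}.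

Let W := [seq y <- undup X | F y].

Lemma sum_extensions_gt p : F p -> (p \in R).+1 <= \sum_(a : A) F (rcons p a).
Proof.
move=> Fp; have [pR | _] := boolP (p \in R).
  have [a [b [ne_ab Fa Fb]]] := R_special pR.
  by rewrite (bigD1 a) // (bigD1 b) 1?eq_sym //= Fa Fb addnA leq_addr.
by have [a Fa] := F_extend Fp; rewrite (bigD1 a) //= Fa leq_addr.
Qed.

Lemma count_prefix_leaf p : F p -> p \in X ->
  count (prefix p) R = 0 /\ count (prefix p) W = 1.
Proof.
move=> Fp pX; split.
  apply/eqP; rewrite eqn0Ngt -has_count; apply/hasPn => q /R_unprefixed.
  by apply: contra => p_q; apply/hasP; exists p.
have -> : count (prefix p) W = count_mem p W.
  apply: eq_in_count => y; rewrite mem_filter mem_undup => /andP [_ yX] /=.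
  by apply/idP/eqP => [/(X_prefix pX yX) | ->] //; apply: prefix_refl.
by rewrite count_uniq_mem ?filter_uniq ?undup_uniq // mem_filter mem_undup Fp pX.
Qed.

(* Induction on [n - size p] in the tree of the words of [F] cut at [X]: a node outside [X]
   is shorter than [n] and has a child in [F], and two children when it is in [R]. *)
Lemma count_prefix_subtree p : F p -> {in X, forall y, prefix y p -> y = p} ->
  (count (prefix p) R).+1 <= count (prefix p) W.
Proof.
have [m] := ubnP (n - size p); elim: m p => // m IHm p lt_m Fp p_min.
have [pX | pNX] := boolP (p \in X); first by case: (count_prefix_leaf Fp pX) => -> ->.
have p_unpre : unprefixed X p.
  by apply/hasPn => y yX; apply: contra pNX => /(p_min y yX) <-.
have lt_pn : size p < n.
  by rewrite ltnNge; apply: contraTN p_unpre => /X_complete; rewrite /unprefixed => ->.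
have child a : F (rcons p a) + count (prefix (rcons p a)) R <= count (prefix (rcons p a)) W.
  case Fpa: (F (rcons p a)); last first.
    suff -> : count (prefix (rcons p a)) R = 0 by [].
    apply/eqP; rewrite eqn0Ngt -has_count; apply/hasPn => q /R_special [b [_ [_ Fqb _]]].
    apply/negP => /prefix_trans/(_ (prefix_rcons q b)) pa_qb.
    by rewrite (F_prefix pa_qb Fqb) in Fpa.
  apply: IHm Fpa _ => [|y yX /prefix_rcons_cases [y_p | //]].
    by rewrite size_rcons subnS -ltnS prednK ?subn_gt0.
  by move/hasPn: p_unpre => /(_ y yX); rewrite y_p.
rewrite (count_prefix_rcons p R) (count_prefix_rcons p W) count_uniq_mem //.
rewrite (count_memPn _) ?mem_filter ?mem_undup ?(negbTE pNX) ?andbF // add0n -addSn.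
have : \sum_(a : A) (F (rcons p a) + count (prefix (rcons p a)) R)
         <= \sum_(a : A) count (prefix (rcons p a)) W by apply: leq_sum => a _; apply: child.
by rewrite big_split; apply: leq_trans; rewrite leq_add2r sum_extensions_gt.
Qed.

Lemma size_special_lt_leaves : (size R).+1 <= size W.
Proof.
have count_nil (s : seq (seq A)) : count (prefix [::]) s = size s.
  by rewrite -count_predT; apply: eq_count => w; rewrite prefix0s.
rewrite -!count_nil; apply: count_prefix_subtree F_nil _ => y _.
by rewrite prefixs0 => /eqP.
Qed.

End FactorTree.

Section InfiniteWord.
Variables (A : finType) (x : nat -> A).

Definition window i m := mkseq (fun k => x (i + k)) m.

Lemma size_window i m : size (window i m) = m.
Proof. exact: size_mkseq. Qed.

Lemma nth_window a i m k : k < m -> nth a (window i m) k = x (i + k).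
Proof. exact: nth_mkseq. Qed.

Lemma window_rcons i m : window i m.+1 = rcons (window i m) (x (i + m)).
Proof. exact: mkseqS. Qed.

Lemma factor_window i m : factor x (window i m).
Proof. by exists i; rewrite size_window. Qed.

Lemma factorP w : factor x w <-> exists i, forall k, k < size w -> nth (x 0) w k = x (i + k).
Proof.
split=> [[i def_w] | [i w_at_i]]; exists i; first by move=> k lt_kw; rewrite def_w nth_window.
apply: (@eq_from_nth _ (x 0)) => [|k lt_kw]; first by rewrite size_window.
by rewrite w_at_i // nth_window.
Qed.

Lemma factor_infix q w : infix q w -> factor x w -> factor x q.
Proof.
case/infixP => [s [s' ->]] /factorP [i w_at_i]; apply/factorP; exists (i + size s) => k lt_kq.
rewrite -addnA -w_at_i; last by rewrite !size_cat ltn_add2l ltn_addr.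
by rewrite nth_cat ltnNge leq_addr /= addKn nth_cat lt_kq.
Qed.

(* [factor x] is not decidable; a classical decision makes it a boolean predicate, so that
   factors can be counted. *)
Definition is_factor w : bool := if excluded_middle_informative (factor x w) then true else false.

Lemma is_factorP w : reflect (factor x w) (is_factor w).
Proof. by rewrite /is_factor; case: excluded_middle_informative => ?; constructor. Qed.

Lemma is_factor_nil : is_factor [::].
Proof. by apply/is_factorP; exists 0. Qed.

Lemma is_factor_infix p q : infix p q -> is_factor q -> is_factor p.
Proof. by move=> p_q /is_factorP q_x; apply/is_factorP; apply: factor_infix p_q q_x. Qed.

Lemma is_factor_window_rcons q i m : suffix q (window i m) -> is_factor (rcons q (x (i + m))).
Proof.
move=> q_win; apply: (@is_factor_infix _ (window i m.+1)); last exact/is_factorP/factor_window.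
by rewrite window_rcons suffixW // suffix_rcons eqxx.
Qed.

Lemma is_factor_extend p : is_factor p -> exists a, is_factor (rcons p a).
Proof.
case/is_factorP => i def_p; exists (x (i + size p)).
by apply: is_factor_window_rcons; rewrite /window -def_p suffix_refl.
Qed.

Lemma suffix_window_right_special q i j m :
    suffix q (window i m) -> window i m = window j m -> x (i + m) != x (j + m) ->
  right_special is_factor q.
Proof.
move=> q_win eq_win ne_next; exists (x (i + m)), (x (j + m)).
by split=> //; apply: is_factor_window_rcons; rewrite -?eq_win.
Qed.

Lemma windows_collide m : exists i j, i < j /\ window i m = window j m.
Proof.
pose s := [seq window k m | k <- iota 0 (#|A| ^ m).+1].
have sub_s : {subset s <= words A m}.
  by move=> _ /mapP [k _ ->]; rewrite mem_words size_window.
have /(uniqPn [::]) [i [j [lt_ij]]] : ~~ uniq s.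
  by apply/negP => /uniq_leq_size /(_ sub_s); rewrite size_map size_iota size_words ltnn.
rewrite size_map size_iota => lt_j; rewrite !(nth_map 0) ?size_iota ?(ltn_trans lt_ij) //.
by rewrite !nth_iota ?(ltn_trans lt_ij) //; exists i, j.
Qed.

Lemma ultimately_periodic_of_windows m :
  (forall i j, window i m = window j m -> x (i + m) = x (j + m)) -> ultimately_periodic x.
Proof.
move=> window_next; have [i [j [lt_ij eq_win]]] := windows_collide m.
have eq_x l : x (i + l) = x (j + l).
  elim/ltn_ind: l => l IHl; case: (ltnP l m) => [lt_lm | le_ml].
    by rewrite -(nth_window (x 0) i lt_lm) eq_win nth_window.
  rewrite -(subnK le_ml) !addnA; apply: window_next.
  apply: (@eq_from_nth _ (x 0)) => [|k]; rewrite !size_window // => lt_km.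
  by rewrite !nth_window // -!addnA IHl // -[ltnRHS](subnK le_ml) ltn_add2l.
exists (j - i); split; first by rewrite subn_gt0.
exists i => l le_il; rewrite -[in RHS](subnKC le_il) eq_x.
by rewrite !addnBA ?(ltnW lt_ij) // addnC.
Qed.

Lemma aperiodic_branching m : ~ ultimately_periodic x ->
  exists i j, window i m = window j m /\ x (i + m) <> x (j + m).
Proof.
move=> aperiodic; apply: NNPP => no_branch.
apply/aperiodic/(ultimately_periodic_of_windows (m := m)).
by move=> i j eq_win; apply: NNPP => ne_next; apply: no_branch; exists i, j.
Qed.

End InfiniteWord.

Lemma size_right_special_lt (A : finType) (x : nat -> A) (X R : seq (seq A)) :
    maximal_bifix_code X -> uniq R -> {in R, forall q, unprefixed X q} ->
    {in R, forall q, right_special (is_factor x) q} ->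
  (size R).+1 <= size [seq y <- undup X | is_factor x y].
Proof.
move=> X_max; have F_prefix p q : prefix p q -> is_factor x q -> is_factor x p.
  by move/prefixW; apply: is_factor_infix.
exact: size_special_lt_leaves (is_factor_nil x) F_prefix (@is_factor_extend _ x)
  (maximal_bifix_prefix_eq X_max) (long_has_prefix X_max) R.
Qed.

Theorem mainTheorem14 (A : finType) (x : nat -> A) :
  (exists (X : seq (seq A)) (d : nat),
     [/\ maximal_bifix_code X, has_degree X d & card_factors_le X x d]) ->
  ultimately_periodic x.
Proof.
case=> X [d [X_max [_ [w [P [uniq_P P_parses <-]]]] card_X]].
apply: NNPP => /(aperiodic_branching (depth X)) [i [j [eq_win ne_next]]].
pose t := window x i (depth X); pose R := unprefixed_suffixes X t.
have le_PR : size P <= size R.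
  by apply: (size_parses_le_long X_max uniq_P P_parses); rewrite size_window.
have lt_RW : (size R).+1 <= size [seq y <- undup X | is_factor x y].
  apply: size_right_special_lt X_max (unprefixed_suffixes_uniq X t) _ _ => q.
    by rewrite mem_unprefixed_suffixes => /andP [].
  rewrite mem_unprefixed_suffixes => /andP [q_t _].
  by apply: suffix_window_right_special q_t eq_win _; apply/eqP.
have le_WP : size [seq y <- undup X | is_factor x y] <= size P.
  apply: card_X; first by rewrite filter_uniq ?undup_uniq.
  by move=> y; rewrite mem_filter mem_undup => /andP [/is_factorP].
by move: (leq_trans lt_RW (leq_trans le_WP le_PR)); rewrite ltnn.
Qed.
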